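(* Let $m\ge 2$, $\alpha\in[0,1]$, $\pi$ a permutation of $E_{m-1}=\{1,\dots,m-1\}$, $V_\alpha$ as defined below, and for $\mathbf{x}^{(0)}\in S^{m-1}$ let $\mathbf{x}^{(n+1)}=V_\alpha(\mathbf{x}^{(n)})$ and let $\omega(\mathbf{x}^{(0)})$ be the set of limit points of $(\mathbf{x}^{(n)})_{n\ge0}$. Let $\Gamma=\{\mathbf{x}\in S^{m-1}: x_m=0\}\cup\{\mathbf{e}_m\}$, $\mathbf{e}_m=(0,\dots,0,1)$. Then: (i) if $\mathbf{x}^{(0)}\in\Gamma$, then $\omega(\mathbf{x}^{(0)})=\{\mathbf{e}_m\}$; (ii) if $\alpha\in(0,1)$ and $\pi\ne\mathrm{Id}$, then for every $\mathbf{x}^{(0)}\in S^{m-1}\setminus(\Gamma\cup X)$ the trajectory converges: $\omega(\mathbf{x}^{(0)})=\{\mathbf{b}\}$ for some point $\mathbf{b}\in X$, where $X=\{\mathbf{x}\in S^{m-1}: x_k=x_l \text{ for all } k,l\in\mathrm{supp}(\tau_i),\ i=1,\dots,q,\ x_m=1/2\}$.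
   Context: $S^{m-1}=\{\mathbf{x}=(x_1,\dots,x_m)\in\mathbb{R}^m: x_i\ge 0,\ \sum_{i=1}^m x_i=1\}$. For a permutation $\pi$ of $E_{m-1}$, $\pi=\tau_1\cdots\tau_q$ is its decomposition into disjoint cycles of length $\ge 2$, and $\mathrm{supp}(\tau_i)$ is the set of elements moved by $\tau_i$. For $\alpha\in[0,1]$ the operator $V_\alpha\colon S^{m-1}\to S^{m-1}$ is $\mathbf{x}\mapsto\mathbf{x}'$ with $x'_k=2x_m(\alpha x_k+(1-\alpha)x_{\pi(k)})$ for $k=1,\dots,m-1$ and $x'_m=x_m^2+\big(\sum_{i=1}^{m-1}x_i\big)^2$. *)

(* Convention: m = n.+1 with n >= 1 (so m >= 2).
   Points of R^m are functions 'I_n.+1 -> R; coordinate k (1 <= k <= m-1)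
   of the paper is index k-1 : 'I_n.+1 (= lift ord_max of k-1 : 'I_n), and
   coordinate m is ord_max.  E_{m-1} is 'I_n. *)
From mathcomp Require Import all_boot all_order all_algebra all_fingroup.
From mathcomp Require Import reals.
Set Implicit Arguments.
Unset Strict Implicit.
Unset Printing Implicit Defensive.
Import Order.TTheory GRing.Theory Num.Theory.
Local Open Scope ring_scope.

Section Defs.
Variables (R : realType) (n : nat).

Definition point := 'I_n.+1 -> R.

Definition in_simplex (x : point) : Prop :=
  (forall i, 0 <= x i) /\ \sum_(i < n.+1) x i = 1.

Definition Valpha (alpha : R) (pi : {perm 'I_n}) (x : point) : point :=
  fun i => match unlift ord_max i with
           | Some k => 2 * x ord_max *
                       (alpha * x (lift ord_max k) + (1 - alpha) * x (lift ord_max (pi k)))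
           | None => x ord_max ^+ 2 + (\sum_(k < n) x (lift ord_max k)) ^+ 2
           end.

Definition traj (alpha : R) (pi : {perm 'I_n}) (x0 : point) (k : nat) : point :=
  iter k (Valpha alpha pi) x0.

(* b is a limit point of the sequence u in R^m (sup-norm neighbourhoods);
   omega(x0) = { b | is_limit_point (traj alpha pi x0) b } *)
Definition is_limit_point (u : nat -> point) (b : point) : Prop :=
  forall eps : R, 0 < eps -> forall N : nat, exists k : nat,
    (N <= k)%N /\ forall i, `|u k i - b i| < eps.

Definition e_m : point := fun i => if i == ord_max then 1 else 0.

Definition in_Gamma (x : point) : Prop :=
  (in_simplex x /\ x ord_max = 0) \/ x = e_m.

(* X: x in the simplex, x_k = x_l whenever k, l lie in the support of the
   same (nontrivial) cycle of pi, and x_m = 1/2.  Two elements lie in the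
   same cycle iff l is in the pi-orbit (porbit) of k; for k = l in a trivial
   cycle the condition is vacuous. *)
Definition in_X (pi : {perm 'I_n}) (x : point) : Prop :=
  [/\ in_simplex x,
      (forall k l : 'I_n, l \in porbit pi k ->
          x (lift ord_max k) = x (lift ord_max l))
    & x ord_max = 1 / 2].

End Defs.

From mathcomp Require Import all_boot all_order all_algebra all_fingroup.
From mathcomp Require Import reals.
From mathcomp Require Import ring lra.
From Stdlib Require Import FunctionalExtensionality.
Import Order.TTheory GRing.Theory Num.Theory.
Local Open Scope ring_scope.
Set Implicit Arguments.
Unset Strict Implicit.

(* Off Gamma, write t_N for the last coordinate of x^(N).  The other
   coordinates are updated by 2 t_N times the averaging map
   z |-> alpha z + (1 - alpha) z o pi, so they equal (1 - t_N) / (1 - t_0)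
   times the N-th iterate z_N of that map, and 2 t_(N+1) - 1 = (2 t_N - 1)^2,
   so t_N -> 1/2.  The averaging map preserves the sum of z over each cycle of pi
   and lowers the energy sum_k z_k^2 by alpha (1 - alpha) sum_k (z_k - z_(pi k))^2;
   these losses are non-increasing and summable, hence tend to 0, so z_N
   converges to the cycle means of z_0 and the limit lies in X.  On Gamma the
   trajectory is at the fixed point e_m from the first step on. *)

Definition eventually (P : nat -> Prop) : Prop :=
  exists N, forall k, (N <= k)%N -> P k.

Lemma eventually_and (P Q : nat -> Prop) :
  eventually P -> eventually Q -> eventually (fun k => P k /\ Q k).
Proof.
move=> [M hM] [N hN]; exists (maxn M N) => k; rewrite geq_max => /andP[hk1 hk2].
by split; [apply: hM | apply: hN].
Qed.

Lemma eventually_forall (T : finType) (P : T -> nat -> Prop) :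
  (forall i, eventually (P i)) -> eventually (fun k => forall i, P i k).
Proof.
move=> hP.
suff [N hN] : eventually (fun k => forall i, i \in enum T -> P i k).
  by exists N => k hk i; apply: hN; rewrite ?mem_enum.
elim: (enum T) => [|a s IH]; first by exists 0%N.
have [N hN] := eventually_and (hP a) IH.
exists N => k /hN [hPa hPs] i; rewrite inE => /predU1P[-> //|]; exact: hPs.
Qed.

Section Vanishing.
Variable R : archiRealFieldType.

Lemma vanishing_of_harmonic_bound (a : nat -> R) (C : R) :
  (forall N, 0 <= a N) -> (forall N, N%:R * a N <= C) ->
  forall e, 0 < e -> eventually (fun k => a k < e).
Proof.
move=> a_ge0 aC e e_gt0.
have C_ge0 : 0 <= C by have := aC 0%N; rewrite mul0r.
have Ce_ge0 : 0 <= C / e by rewrite divr_ge0 // ltW.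
exists (Num.bound (C / e)) => k hk; rewrite ltNge; apply/negP => ea.
have : C < k%:R * e.
  rewrite -ltr_pdivrMr //; apply: (lt_le_trans (archi_boundP Ce_ge0)).
  by rewrite ler_nat.
have : k%:R * e <= k%:R * a k by rewrite ler_wpM2l.
have := aC k; lra.
Qed.

Lemma expr_harmonic_bound (q : R) N : 0 <= q -> q <= 1 ->
  N%:R * ((1 - q) * q ^+ N) <= 1.
Proof.
move=> q_ge0 q_le1.
have qN_le : N%:R * q ^+ N <= \sum_(i < N) q ^+ i.
  rewrite mulrC mulr_natr -[in X in X <= _](card_ord N) -sumr_const.
  apply: ler_sum => i _.
  rewrite card_ord; apply: (ler_wiXn2l q_ge0 q_le1).
  exact: ltnW (ltn_ord i).
have geom : (1 - q) * \sum_(i < N) q ^+ i = 1 - q ^+ N.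
  by rewrite -opprB mulNr -subrX1 opprB.
have := exprn_ge0 N q_ge0.
have : (1 - q) * (N%:R * q ^+ N) <= (1 - q) * \sum_(i < N) q ^+ i.
  by rewrite ler_wpM2l // subr_ge0.
rewrite geom; lra.
Qed.

Lemma exprn_vanishing (q : R) : 0 <= q -> q < 1 ->
  forall e, 0 < e -> eventually (fun k => q ^+ k < e).
Proof.
move=> q_ge0 q_lt1 e e_gt0.
have q1_gt0 : 0 < 1 - q by rewrite subr_gt0.
have a_ge0 N : 0 <= (1 - q) * q ^+ N by rewrite mulr_ge0 ?exprn_ge0 // ltW.
have [N hN] := vanishing_of_harmonic_bound a_ge0
  (fun N => expr_harmonic_bound N q_ge0 (ltW q_lt1)) (mulr_gt0 q1_gt0 e_gt0).
by exists N => k /hN; rewrite ltr_pM2l.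
Qed.

End Vanishing.

Section Points.
Variables (R : realType) (n : nat).
Implicit Types (x b c : point R n) (u : nat -> point R n).

Definition converges_to u b : Prop :=
  forall e : R, 0 < e -> eventually (fun k => forall i, `|u k i - b i| < e).

Lemma limit_pointE u b : converges_to u b ->
  forall c, is_limit_point u c <-> c = b.
Proof.
move=> ub c; split=> [uc | -> e e_gt0 N]; last first.
  have [M hM] := ub e e_gt0.
  by exists (maxn N M); split; [rewrite leq_maxl | apply: hM; rewrite leq_maxr].
apply: functional_extensionality => i; apply/eqP; rewrite -subr_eq0.
apply/negPn/negP => cb; pose e := `|c i - b i| / 2.
have e_gt0 : 0 < e by rewrite divr_gt0 ?normr_gt0.
have [M hM] := ub e e_gt0; have [k [Mk hk]] := uc e e_gt0 M.
have := ler_distD (u k i) (c i) (b i); rewrite [`|c i - u k i|]distrC.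
have := hM k Mk i; have := hk i; rewrite /e; lra.
Qed.

Lemma converges_to_sum u b s :
  converges_to u b -> (forall k, \sum_i u k i = s) -> \sum_i b i = s.
Proof.
move=> ub us; apply/eqP; rewrite -subr_eq0; apply/negPn/negP => bs.
pose e := `|\sum_i b i - s| / n.+1%:R.
have e_gt0 : 0 < e by rewrite divr_gt0 ?normr_gt0 ?ltr0n.
have [N hN] := ub e e_gt0.
have : `|\sum_i b i - s| <= \sum_(i < n.+1) `|u N i - b i|.
  by rewrite -(us N) distrC -sumrB ler_norm_sum.
have : \sum_(i < n.+1) `|u N i - b i| < \sum_(i < n.+1) e.
  apply: ltr_sum => [|i _]; last exact: hN.
  by apply/hasP; exists ord0; rewrite ?mem_index_enum.
rewrite sumr_const card_ord -mulr_natr /e divfK ?pnatr_eq0 //; lra.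
Qed.

Lemma sum_point x : \sum_i x i = x ord_max + \sum_(k < n) x (lift ord_max k).
Proof. by rewrite (bigD1_ord ord_max). Qed.

Lemma e_m_max : @e_m R n ord_max = 1.
Proof. by rewrite /e_m eqxx. Qed.

Lemma e_m_lift k : @e_m R n (lift ord_max k) = 0.
Proof. by rewrite /e_m eq_sym (negbTE (neq_lift _ _)). Qed.

Lemma eq_e_m x : in_simplex x -> x ord_max = 1 -> x = @e_m R n.
Proof.
move=> [x_ge0 x_sum] x_max; apply: functional_extensionality => i.
have /psumr_eq0P lift0 : \sum_(k < n) x (lift ord_max k) = 0.
  by apply: (addrI (x ord_max)); rewrite -sum_point x_sum x_max addr0.
by case: (unliftP ord_max i) => [k ->|->]; rewrite ?e_m_lift ?e_m_max ?lift0.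
Qed.

Lemma not_Gamma_max x : in_simplex x -> ~ in_Gamma x -> 0 < x ord_max < 1.
Proof.
move=> x_simplex x_Gamma; have [x_ge0 x_sum] := x_simplex.
have x_le1 : x ord_max <= 1.
  by rewrite -x_sum sum_point lerDl sumr_ge0.
rewrite !lt_neqAle x_ge0 x_le1 !andbT; apply/andP; split; apply/eqP => x_max.
  by apply: x_Gamma; left.
by apply: x_Gamma; right; apply: eq_e_m.
Qed.

End Points.

Section Gamma.
Variables (R : realType) (n : nat) (alpha : R) (pi : {perm 'I_n}).
Implicit Type x : point R n.
Local Notation V := (Valpha alpha pi).

Lemma Valpha_max x :
  V x ord_max = x ord_max ^+ 2 + (\sum_(k < n) x (lift ord_max k)) ^+ 2.
Proof. by rewrite /Valpha unlift_none. Qed.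

Lemma Valpha_lift x k : V x (lift ord_max k) =
  2 * x ord_max * (alpha * x (lift ord_max k) + (1 - alpha) * x (lift ord_max (pi k))).
Proof. by rewrite /Valpha liftK. Qed.

Lemma Valpha_e_m : V (@e_m R n) = @e_m R n.
Proof.
apply: functional_extensionality => i; case: (unliftP ord_max i) => [k ->|->].
  by rewrite Valpha_lift !e_m_lift; ring.
rewrite Valpha_max e_m_max big1 => [|k _]; last exact: e_m_lift.
by ring.
Qed.

Lemma Valpha_face x : in_simplex x -> x ord_max = 0 -> V x = @e_m R n.
Proof.
move=> [_ x_sum] x_max; apply: functional_extensionality => i.
case: (unliftP ord_max i) => [k ->|->].
  by rewrite Valpha_lift e_m_lift x_max; ring.
move: x_sum; rewrite sum_point x_max add0r => lift_sum.
by rewrite Valpha_max e_m_max lift_sum x_max; ring.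
Qed.

Lemma traj_Gamma x0 : in_Gamma x0 -> forall N, traj alpha pi x0 N.+1 = @e_m R n.
Proof.
have traj_e_m N : traj alpha pi (@e_m R n) N = @e_m R n.
  by elim: N => [|N IH] //; rewrite /traj iterS -/(traj _ _ _ _) IH Valpha_e_m.
case=> [[x0_simplex x0_max]|->] N; last exact: traj_e_m.
by rewrite /traj iterSr Valpha_face //; exact: traj_e_m.
Qed.

Lemma limit_points_Gamma x0 : in_Gamma x0 ->
  forall b, is_limit_point (traj alpha pi x0) b <-> b = @e_m R n.
Proof.
move=> x0_Gamma; apply: limit_pointE => e e_gt0.
by exists 1%N => -[//|N] _ i; rewrite traj_Gamma // subrr normr0.
Qed.

End Gamma.

Section Averaging.
Variables (R : realFieldType) (n : nat) (alpha : R) (pi : {perm 'I_n}).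
Implicit Types (f : 'I_n -> R) (P : pred 'I_n).

Definition avg_step f : 'I_n -> R := fun k => alpha * f k + (1 - alpha) * f (pi k).

Definition cycle_diff f : 'I_n -> R := fun k => f k - f (pi k).

Definition energy f : R := \sum_k f k ^+ 2.

Definition cycle_mean f a : R :=
  (\sum_(l in porbit pi a) f l) / #|porbit pi a|%:R.

Lemma energy_ge0 f : 0 <= energy f.
Proof. by apply: sumr_ge0 => k _; apply: sqr_ge0. Qed.

Lemma porbit_stable a k : (pi k \in porbit pi a) = (k \in porbit pi a).
Proof. by rewrite -!eq_porbit_mem; have := porbit_perm pi 1 k; rewrite expg1 => ->. Qed.

Lemma sum_perm_stable P (F : 'I_n -> R) : (forall k, P (pi k) = P k) ->
  \sum_(k | P k) F (pi k) = \sum_(k | P k) F k.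
Proof.
move=> P_pi; rewrite [RHS](reindex_inj (@perm_inj _ pi)).
by apply: eq_bigl => k; rewrite P_pi.
Qed.

Lemma sum_avg_step P f : (forall k, P (pi k) = P k) ->
  \sum_(k | P k) avg_step f k = \sum_(k | P k) f k.
Proof. by move=> P_pi; rewrite big_split -!mulr_sumr sum_perm_stable //=; ring. Qed.

Lemma energy_avg_step f :
  energy (avg_step f) = energy f - alpha * (1 - alpha) * energy (cycle_diff f).
Proof.
rewrite /energy /avg_step /cycle_diff.
transitivity (\sum_k (alpha * f k ^+ 2 + (1 - alpha) * f (pi k) ^+ 2
                       - alpha * (1 - alpha) * (f k - f (pi k)) ^+ 2)).
  by apply: eq_bigr => k _; ring.
rewrite sumrB big_split /= -!mulr_sumr (@sum_perm_stable xpredT (fun k => f k ^+ 2)) //.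
ring.
Qed.

Lemma cycle_diff_avg_step f : cycle_diff (avg_step f) = avg_step (cycle_diff f).
Proof. by apply: functional_extensionality => k; rewrite /cycle_diff /avg_step; ring. Qed.

Lemma avg_step_ge0 f : 0 <= alpha <= 1 -> (forall k, 0 <= f k) ->
  forall k, 0 <= avg_step f k.
Proof.
move=> /andP[a_ge0 a_le1] f_ge0 k.
by rewrite addr_ge0 ?mulr_ge0 ?subr_ge0.
Qed.

Lemma cycle_mean_porbit f a l : l \in porbit pi a -> cycle_mean f l = cycle_mean f a.
Proof. by rewrite /cycle_mean -eq_porbit_mem => /eqP->. Qed.

Lemma cycle_diff_iter_bound f e : (forall k, `|cycle_diff f k| <= e) ->
  forall a j, `|f a - f ((pi ^+ j)%g a)| <= j%:R * e.
Proof.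
move=> f_e a; elim=> [|j IH]; first by rewrite expg0 perm1 subrr normr0 mul0r.
rewrite expgSr permM -[_.+1]addn1 natrD mulrDl mul1r.
have -> : f a - f (pi ((pi ^+ j)%g a)) =
    (f a - f ((pi ^+ j)%g a)) + cycle_diff f ((pi ^+ j)%g a) by rewrite /cycle_diff; ring.
by apply: (le_trans (ler_normD _ _)); apply: lerD.
Qed.

End Averaging.

Section AveragingLimit.
Variables (R : archiRealFieldType) (n : nat) (alpha : R) (pi : {perm 'I_n}).
Hypotheses (alpha_gt0 : 0 < alpha) (alpha_lt1 : alpha < 1).
Variable z0 : 'I_n -> R.

Definition avg_iter N : 'I_n -> R := iter N (avg_step alpha pi) z0.

Local Notation z := avg_iter.
Local Notation c := (alpha * (1 - alpha)).
Local Notation D N := (energy (cycle_diff pi (z N))).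

Lemma avg_iterS N : z N.+1 = avg_step alpha pi (z N).
Proof. by []. Qed.

Let c_gt0 : 0 < c.
Proof. by rewrite mulr_gt0 // subr_gt0. Qed.

Lemma dissipation_nonincr N : D N.+1 <= D N.
Proof.
rewrite avg_iterS cycle_diff_avg_step energy_avg_step gerBl.
by rewrite mulr_ge0 ?energy_ge0 ?ltW.
Qed.

(* Telescope the energy losses [c * D j] (j < N), each at least [c * D N]. *)
Lemma energy_dissipation_bound N : N%:R * (c * D N) + energy (z N) <= energy z0.
Proof.
elim: N => [|N IH]; first by rewrite mul0r add0r.
have energy_step : energy (z N.+1) = energy (z N) - c * D N.
  by rewrite avg_iterS energy_avg_step.
have cD : c * D N.+1 <= c * D N by rewrite ler_pM2l // dissipation_nonincr.
have : N%:R * (c * D N.+1) <= N%:R * (c * D N) by apply: ler_wpM2l.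
rewrite energy_step -natr1; lra.
Qed.

Lemma cycle_diff_vanishing e : 0 < e ->
  eventually (fun k => forall i, `|cycle_diff pi (z k) i| < e).
Proof.
move=> e_gt0.
have a_ge0 N : 0 <= c * D N by rewrite mulr_ge0 ?energy_ge0 ?ltW.
have aC N : N%:R * (c * D N) <= energy z0.
  by have := energy_dissipation_bound N; have := energy_ge0 (z N); lra.
have cee_gt0 : 0 < c * (e * e) by rewrite mulr_gt0 // mulr_gt0.
have [N hN] := vanishing_of_harmonic_bound a_ge0 aC cee_gt0.
exists N => k /hN; rewrite ltr_pM2l // => Dk i.
have : cycle_diff pi (z k) i ^+ 2 <= D k.
  rewrite /energy (bigD1 i) //= lerDl; apply: sumr_ge0 => j _; apply: sqr_ge0.
move=> d_le; rewrite ltr_norml; apply/andP; split; nra.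
Qed.

Lemma sum_porbit_avg_iter a N :
  \sum_(l in porbit pi a) z N l = \sum_(l in porbit pi a) z0 l.
Proof.
elim: N => [//|N IH]; rewrite avg_iterS -IH; apply: sum_avg_step => k.
exact: porbit_stable.
Qed.

Lemma porbit_avg_iter_close a l : l \in porbit pi a ->
  forall e, 0 < e -> eventually (fun k => `|z k a - z k l| < e).
Proof.
move=> /porbitP [j ->] e e_gt0.
have j_gt0 : 0 < j.+1%:R :> R by rewrite ltr0n.
have [N hN] := cycle_diff_vanishing (divr_gt0 e_gt0 j_gt0).
exists N => k /hN diff_small.
have := cycle_diff_iter_bound (fun i => ltW (diff_small i)) a j.
move/le_lt_trans; apply.
by rewrite mulrCA gtr_pMr // ltr_pdivrMr // mul1r ltr_nat.
Qed.

Lemma avg_iter_cvg a e : 0 < e ->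
  eventually (fun k => `|z k a - cycle_mean pi z0 a| < e).
Proof.
move=> e_gt0; set O := porbit pi a.
have O_gt0 : 0 < #|O|%:R :> R by rewrite ltr0n lt0n card_porbit_neq0.
have [N hN] : eventually (fun k => forall l, l \in O -> `|z k a - z k l| < e).
  apply: eventually_forall => l; case: (boolP (l \in O)) => [lO|lO].
    by have [N hN] := porbit_avg_iter_close lO e_gt0; exists N => k /hN.
  by exists 0%N.
exists N => k /hN close.
have -> : z k a - cycle_mean pi z0 a = (\sum_(l in O) (z k a - z k l)) / #|O|%:R.
  rewrite sumrB sumr_const sum_porbit_avg_iter /cycle_mean -/O -mulr_natr.
  by field; rewrite lt0r_neq0.
rewrite normrM normfV (ger0_norm (ltW O_gt0)) ltr_pdivrMr //.
apply: (le_lt_trans (ler_norm_sum _ _ _)).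
rewrite mulr_natr -sumr_const; apply: ltr_sum => [|l lO]; last exact: close.
by apply/hasP; exists a; rewrite ?mem_index_enum // /O porbit_id.
Qed.

End AveragingLimit.

Section Trajectory.
Variables (R : realType) (n : nat) (alpha : R) (pi : {perm 'I_n}).
Hypotheses (alpha_gt0 : 0 < alpha) (alpha_lt1 : alpha < 1).
Variable x0 : point R n.
Hypotheses (x0_simplex : in_simplex x0)
  (x0_max_gt0 : 0 < x0 ord_max) (x0_max_lt1 : x0 ord_max < 1).

Local Notation x := (traj alpha pi x0).
Local Notation t N := (x N ord_max).
Local Notation s0 := (1 - x0 ord_max).
Local Notation z0 := (fun k => x0 (lift ord_max k)).
Local Notation z := (avg_iter alpha pi z0).

Let s0_gt0 : 0 < s0.
Proof. by rewrite subr_gt0. Qed.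

Let s0_neq0 : s0 != 0.
Proof. by rewrite lt0r_neq0. Qed.

Lemma sum_avg_iter N : \sum_k z N k = s0.
Proof.
elim: N => [|N IH]; last by rewrite avg_iterS -IH; apply: (@sum_avg_step _ _ _ _ xpredT).
by case: x0_simplex => _; rewrite sum_point => <-; ring.
Qed.

Lemma avg_iter_ge0 N k : 0 <= z N k.
Proof.
elim: N k => [|N IH] k; first by case: x0_simplex => x0_ge0 _; apply: x0_ge0.
by rewrite avg_iterS; apply: (avg_step_ge0 _ _ IH); rewrite !ltW.
Qed.

Lemma avg_iter_le N k : z N k <= s0.
Proof.
rewrite -(sum_avg_iter N) (bigD1 k) //= lerDl.
by apply: sumr_ge0 => j _; apply: avg_iter_ge0.
Qed.

Lemma traj_lift N k : x N (lift ord_max k) = (1 - t N) / s0 * z N k.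
Proof.
elim: N k => [|N IH] k; first by rewrite /= mulfV // mul1r.
have sum_lift : \sum_(l < n) x N (lift ord_max l) = 1 - t N.
  by under eq_bigr do rewrite IH; rewrite -mulr_sumr sum_avg_iter divfK.
by rewrite [x _]/= Valpha_lift Valpha_max sum_lift !IH avg_iterS /avg_step; field.
Qed.

Lemma sum_traj_lift N : \sum_(k < n) x N (lift ord_max k) = 1 - t N.
Proof. by under eq_bigr do rewrite traj_lift; rewrite -mulr_sumr sum_avg_iter divfK. Qed.

Lemma sum_traj N : \sum_i x N i = 1.
Proof. by rewrite sum_point sum_traj_lift addrC subrK. Qed.

Lemma traj_max_gap N : 2 * (t N - 1 / 2) = (2 * (t 0 - 1 / 2)) ^+ (2 ^ N).
Proof.
elim: N => [|N IH]; first by rewrite expr1.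
by rewrite expnSr exprM -IH [x _]/= Valpha_max sum_traj_lift; field.
Qed.

Lemma traj_max_cvg e : 0 < e -> eventually (fun k => `|t k - 1 / 2| < e).
Proof.
move=> e_gt0; set q := `|2 * (t 0 - 1 / 2)|.
have q_lt1 : q < 1.
  by rewrite /q [t 0]/= ltr_norml; have := x0_max_gt0; have := x0_max_lt1; lra.
have [N hN] := exprn_vanishing (normr_ge0 _) q_lt1 (mulr_gt0 (ltr0Sn _ 1) e_gt0).
exists N => k /hN qk.
have : `|2 * (t k - 1 / 2)| <= q ^+ k.
  rewrite traj_max_gap normrX; apply: ler_wiXn2l => //; first exact: ltW.
  exact: ltnW (ltn_expl k (ltnSn 1)).
rewrite normrM ger0_norm //; lra.
Qed.

Definition traj_limit : point R n := fun i =>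
  if unlift ord_max i is Some k then 1 / 2 / s0 * cycle_mean pi z0 k else 1 / 2.

Lemma traj_cvg : converges_to x traj_limit.
Proof.
move=> e e_gt0; apply: eventually_forall => i.
have e2_gt0 : 0 < e / 2 by rewrite divr_gt0.
case: (unliftP ord_max i) => [k ->|->]; rewrite /traj_limit ?liftK ?unlift_none;
  last first.
  by have [N hN] := traj_max_cvg e_gt0; exists N => m /hN.
have [N hN] := eventually_and (traj_max_cvg e2_gt0)
  (avg_iter_cvg pi alpha_gt0 alpha_lt1 z0 k (mulr_gt0 e_gt0 s0_gt0)).
exists N => m /hN [u_small w_small]; rewrite traj_lift.
set u := t m - 1 / 2 in u_small *; set w := z m k - _ in w_small.
have r_ge0 : 0 <= z m k / s0 by rewrite divr_ge0 ?avg_iter_ge0 ?ltW.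
have r_le1 : z m k / s0 <= 1 by rewrite ler_pdivrMr ?mul1r ?avg_iter_le.
have -> : (1 - t m) / s0 * z m k - 1 / 2 / s0 * cycle_mean pi z0 k =
    - (u * (z m k / s0)) + w / (2 * s0) by rewrite /u /w; field.
apply: (le_lt_trans (ler_normD _ _)).
have two_s0_gt0 : 0 < 2 * s0 by rewrite mulr_gt0.
rewrite normrN normrM (ger0_norm r_ge0) normrM normfV (gtr0_norm two_s0_gt0).
have : `|u| * (z m k / s0) <= `|u| by rewrite ler_piMr.
have : `|w| / (2 * s0) < e / 2.
  by rewrite ltr_pdivrMr // (_ : e / 2 * (2 * s0) = e * s0) //; field.
lra.
Qed.

Lemma traj_limit_in_X : in_X pi traj_limit.
Proof.
have [x0_ge0 _] := x0_simplex.
have mean_ge0 k : 0 <= cycle_mean pi z0 k.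
  by rewrite divr_ge0 // sumr_ge0.
split; [split | move=> k l kl | by rewrite /traj_limit unlift_none].
- move=> i; rewrite /traj_limit; case: (unlift ord_max i) => [k|].
    by rewrite mulr_ge0 ?mean_ge0 // !divr_ge0 // ltW.
  by rewrite divr_ge0.
- exact: converges_to_sum traj_cvg sum_traj.
- by rewrite /traj_limit !liftK (cycle_mean_porbit _ kl).
Qed.

End Trajectory.

Theorem theorem2 (R : realType) (n : nat) (hn : (1 <= n)%N)
    (alpha : R) (ha0 : 0 <= alpha) (ha1 : alpha <= 1) (pi : {perm 'I_n}) :
  (forall x0 : point R n, in_Gamma x0 ->
     forall b, is_limit_point (traj alpha pi x0) b <-> b = @e_m R n)
  /\
  (0 < alpha -> alpha < 1 -> pi != 1%g ->
     forall x0 : point R n, in_simplex x0 -> ~ in_Gamma x0 -> ~ in_X pi x0 ->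
     exists b : point R n, in_X pi b /\
       forall c, is_limit_point (traj alpha pi x0) c <-> c = b).
Proof.
split=> [x0|alpha_gt0 alpha_lt1 _ x0 x0_simplex x0_Gamma _].
  exact: limit_points_Gamma.
have /andP[x0_max_gt0 x0_max_lt1] := not_Gamma_max x0_simplex x0_Gamma.
exists (traj_limit pi x0); split.
  exact: (traj_limit_in_X pi alpha_gt0 alpha_lt1 x0_simplex x0_max_gt0 x0_max_lt1).
apply: limit_pointE.
exact: (traj_cvg pi alpha_gt0 alpha_lt1 x0_simplex x0_max_gt0 x0_max_lt1).
Qed.
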